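(* Let $q$ be a prime with $q \equiv 3 \pmod 8$ (there are infinitely many such primes). Let $n \geq 1$ be an integer, $v = 3q^n$, and $k$ an odd positive integer. Then there are no integers $a_1, \ldots, a_k$ with $1 \leq a_j < v$ such that $\prod_{j=1}^k a_j = \prod_{j=1}^k (v - a_j)$. *)

From mathcomp Require Import all_boot.

(* Let [chi x = (x_q')^((q-1)/2)] in [F_q], where [x_q'] is the part of [x]
   prime to [q]; it is multiplicative and nonzero on positive integers.  It
   changes sign under [a |-> 3 q^n - a]: removing the [q]-part of [a] leaves
   either [-b] modulo [q] ([-1] is a non-residue as [q = 3 mod 4]) or the swap
   [1 <-> 2] ([2] is a non-residue as [q = 3 mod 8]).  Applying [chi] to the
   product identity gives [P = (-1)^k P = -P] with [P != 0], impossible in odd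
   characteristic. *)

From mathcomp Require Import all_boot all_algebra zify.

Set Implicit Arguments.
Unset Strict Implicit.
Unset Printing Implicit Defensive.

Import GRing.Theory.
Local Open Scope ring_scope.

Definition least_abs_residue (q x : nat) : nat :=
  if (x <= q./2)%N then x else (q - x)%N.

Section GaussLemmaForTwo.
Variable q : nat.
Hypotheses (q_prime : prime q) (q_odd : odd q).
Local Notation m := q./2.
Local Notation r := (least_abs_residue q).

Lemma natrFp_eq0 (x : nat) : (x%:R == 0 :> 'F_q) = (q %| x)%N.
Proof. by rewrite (dvdn_pcharf (pchar_Fp q_prime)). Qed.

Lemma least_abs_residue_bounds x : (0 < x < q)%N -> (0 < r x <= m)%N.
Proof. by rewrite /least_abs_residue; case: ifP; lia. Qed.

Lemma least_abs_residue_inj_even x y : (0 < x < q)%N -> (0 < y < q)%N ->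
  ~~ odd x -> ~~ odd y -> r x = r y -> x = y.
Proof. by rewrite /least_abs_residue; case: ifP; case: ifP; lia. Qed.

Lemma natr_least_abs_residue x : (x <= q)%N ->
  (r x)%:R = (if (x <= m)%N then 1 else -1) * x%:R :> 'F_q.
Proof.
rewrite /least_abs_residue; case: ifP => _ xq; first by rewrite mul1r.
have /eqP q0 : (q%:R : 'F_q) == 0 by rewrite natrFp_eq0.
by rewrite natrB // q0 sub0r mulN1r.
Qed.

Lemma double_lt_q (i : 'I_m) : (0 < 2 * i.+1 < q)%N.
Proof. by have := ltn_ord i; lia. Qed.

Lemma residue_index_lt (i : 'I_m) : ((r (2 * i.+1)).-1 < m)%N.
Proof. by have := least_abs_residue_bounds (double_lt_q i); lia. Qed.

Definition residue_index (i : 'I_m) : 'I_m := Ordinal (residue_index_lt i).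

Lemma residue_index_inj : injective residue_index.
Proof.
move=> i j /(congr1 val) /= eq_ij; apply: val_inj.
have := least_abs_residue_bounds (double_lt_q i).
have := least_abs_residue_bounds (double_lt_q j).
have := least_abs_residue_inj_even (double_lt_q i) (double_lt_q j).
rewrite !oddM /=; lia.
Qed.

Lemma prod_least_abs_residue :
  \prod_(i < m) (r (2 * i.+1))%:R = \prod_(i < m) i.+1%:R :> 'F_q.
Proof.
rewrite [RHS](reindex_inj residue_index_inj); apply: eq_bigr => i _ /=.
by have := least_abs_residue_bounds (double_lt_q i); case: (r _).
Qed.

Lemma prod_sign_half :
  \prod_(i < m) (if (2 * i.+1 <= m)%N then 1 else -1) = (-1) ^+ (m - m./2) :> 'F_q.
Proof.
rewrite -(big_mkord xpredT (fun i => if (2 * i.+1 <= m)%N then 1 else -1 : 'F_q)).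
rewrite (big_cat_nat (n := m./2)) //=; last by lia.
rewrite (eq_big_nat _ _ (F2 := fun=> 1)) => [|i /andP[_ ?]]; last by rewrite ifT //; lia.
rewrite (eq_big_nat _ _ (F2 := fun=> -1) (m := m./2)) => [|i /andP[? _]];
  last by rewrite ifF //; lia.
by rewrite !prodr_const_nat expr1n mul1r.
Qed.

(* Gauss's lemma for 2: up to sign, the [2 * i.+1] for [i < m] are a
   permutation of [1..m], and exactly [m - m./2] of them exceed [m]. *)
Lemma Fp_two_exp_half : (2%:R : 'F_q) ^+ m = (-1) ^+ (m - m./2).
Proof.
have fact_neq0 : \prod_(i < m) i.+1%:R != 0 :> 'F_q.
  apply/prodf_neq0 => i _; rewrite natrFp_eq0.
  by apply/negP => /dvdn_leq; have := ltn_ord i; lia.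
have double_prod :
    \prod_(i < m) (2 * i.+1)%:R = 2%:R ^+ m * \prod_(i < m) i.+1%:R :> 'F_q.
  rewrite (eq_bigr (fun i : 'I_m => 2%:R * i.+1%:R)) => [|i _]; last by rewrite natrM.
  by rewrite big_split prodr_const card_ord.
have : (-1) ^+ (m - m./2) * 2%:R ^+ m = 1 :> 'F_q.
  apply: (mulIf fact_neq0).
  rewrite mul1r -mulrA -double_prod -prod_sign_half -big_split /=.
  rewrite -[RHS]prod_least_abs_residue; apply: eq_bigr => i _.
  by rewrite natr_least_abs_residue // ltnW //; case/andP: (double_lt_q i).
by move/(congr1 ( *%R ((-1) ^+ (m - m./2)))); rewrite signrMK mulr1.
Qed.

End GaussLemmaForTwo.

Lemma Fp_two_exp_half_mod8_3 q : prime q -> (q %% 8 = 3)%N ->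
  (2%:R : 'F_q) ^+ q./2 = -1.
Proof.
move=> q_prime q8; have q_odd : odd q by rewrite (divn_eq q 8) q8; lia.
have odd_sign : odd (q./2 - q./2./2) by rewrite (divn_eq q 8) q8; lia.
by rewrite Fp_two_exp_half // -signr_odd odd_sign.
Qed.

(* By Euler's criterion, [chi q x] is the Legendre symbol of the part of [x]
   prime to [q]. *)
Definition chi (q x : nat) : 'F_q := (x`_q^')%:R ^+ q./2.

Section Character.
Variable q : nat.
Hypothesis q_prime : prime q.
Local Notation chi := (chi q).

Lemma chi1 : chi 1 = 1.
Proof. by rewrite /chi partn1 expr1n. Qed.

Lemma chiM x y : (0 < x)%N -> (0 < y)%N -> chi (x * y) = chi x * chi y.
Proof. by move=> x_gt0 y_gt0; rewrite /chi partnM // natrM exprMn. Qed.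

Lemma chi_prod (I : finType) (F : I -> nat) : (forall i, 0 < F i)%N ->
  chi (\prod_i F i) = \prod_i chi (F i).
Proof.
move=> F_gt0.
suff [] : (0 < \prod_i F i)%N /\ chi (\prod_i F i) = \prod_i chi (F i) by [].
apply: (big_ind2 (fun x y => (0 < x)%N /\ chi x = y))
  => [|x _ y _ [x_gt0 <-] [y_gt0 <-]|//].
  by rewrite chi1.
by rewrite muln_gt0 x_gt0 y_gt0 chiM.
Qed.

Lemma chi_neq0 x : (0 < x)%N -> chi x != 0.
Proof.
by move=> x_gt0; rewrite expf_neq0 // natrFp_eq0 // -p'natE // part_pnat.
Qed.

Lemma chi_coprime y : ~~ (q %| y)%N -> chi y = y%:R ^+ q./2.
Proof. by move=> qNy; rewrite /chi part_pnat_id // p'natE. Qed.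

Lemma chi_qpowM f y : (0 < y)%N -> chi (q ^ f * y)%N = chi y.
Proof.
move=> y_gt0; have qf_gt0 : (0 < q ^ f)%N by rewrite expn_gt0 prime_gt0.
have qf_part : ((q ^ f)`_q^' = 1)%N by rewrite part_p'nat // pnatNK pnatX pnat_id.
by rewrite chiM // {1}/chi qf_part expr1n mul1r.
Qed.

Hypothesis q_mod8 : (q %% 8 = 3)%N.

Lemma chi_reflect_coprime e b : (0 < b < 3 * q ^ e)%N -> ~~ (q %| b)%N ->
  chi (3 * q ^ e - b)%N = - chi b.
Proof.
move=> /andP[b_gt0 b_lt] qNb; have q_ge3 : (3 <= q)%N by lia.
case: e b_lt => [|e] b_lt.
  have [-> | ->] : b = 1%N \/ b = 2%N by lia.
    by rewrite chi1 chi_coprime ?gtnNdvd // Fp_two_exp_half_mod8_3.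
  by rewrite chi1 chi_coprime ?gtnNdvd // Fp_two_exp_half_mod8_3 // opprK.
have q_dvd : (q %| 3 * q ^ e.+1)%N by rewrite dvdn_mull // dvdn_exp.
have qNc : ~~ (q %| 3 * q ^ e.+1 - b)%N.
  by apply: contra qNb => q_dvd_c; rewrite -(subKn (ltnW b_lt)) dvdn_sub.
have /eqP v0 : ((3 * q ^ e.+1)%:R : 'F_q) == 0 by rewrite natrFp_eq0.
have half_odd : odd q./2 by rewrite (divn_eq q 8) q_mod8; lia.
rewrite !chi_coprime // natrB ?(ltnW b_lt) // v0 sub0r exprNn.
by rewrite -signr_odd half_odd mulN1r.
Qed.

Lemma chi_reflect e a : (0 < a < 3 * q ^ e)%N -> chi (3 * q ^ e - a)%N = - chi a.
Proof.
move=> /andP[a_gt0 a_lt]; set f := logn q a; set b := (a`_q^')%N.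
have a_split : a = (q ^ f * b)%N by rewrite /f /b -p_part partnC.
have b_gt0 : (0 < b)%N by apply: part_gt0.
have qNb : ~~ (q %| b)%N by rewrite -p'natE // part_pnat.
have f_le : (f <= e)%N.
  rewrite -ltnS -(ltn_exp2l _ _ (prime_gt1 q_prime)) expnS.
  apply: leq_ltn_trans (leq_trans a_lt _); first by rewrite a_split leq_pmulr.
  by rewrite leq_mul2r; apply/orP; right; lia.
have v_split : (3 * q ^ e - a = q ^ f * (3 * q ^ (e - f) - b))%N.
  by rewrite mulnBr mulnCA -expnD subnKC // -a_split.
have b_lt : (b < 3 * q ^ (e - f))%N.
  have qf_gt0 : (0 < q ^ f)%N by rewrite expn_gt0 prime_gt0.
  by rewrite -(ltn_pmul2l qf_gt0) mulnCA -expnD subnKC // -a_split.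
rewrite v_split chi_qpowM ?subn_gt0 // chi_reflect_coprime ?b_gt0 //.
by rewrite a_split chi_qpowM.
Qed.

End Character.

Local Close Scope ring_scope.

Theorem corollary4p13 (q n k : nat) :
  prime q -> q %% 8 = 3 -> 1 <= n -> odd k ->
  ~ (exists a : 'I_k -> nat,
       (forall j, 1 <= a j < 3 * q ^ n) /\
       \prod_(j < k) a j = \prod_(j < k) (3 * q ^ n - a j)).
Proof.
move=> q_prime q_mod8 _ k_odd [a [a_range a_eq]].
have a_gt0 j : 0 < a j by case/andP: (a_range j).
have b_gt0 j : 0 < 3 * q ^ n - a j by rewrite subn_gt0; case/andP: (a_range j).
have P_neq0 : (\prod_(j < k) chi q (a j) != 0)%R.
  by apply/prodf_neq0 => j _; apply: chi_neq0.
have two_neq0 : (2%:R != 0 :> 'F_q)%R.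
  by rewrite natrFp_eq0 // gtnNdvd //; rewrite (divn_eq q 8) q_mod8; lia.
have := congr1 (chi q) a_eq; rewrite !chi_prod //.
rewrite [X in _ = X -> _](eq_bigr (fun j => - chi q (a j)))%R => [|j _]; last first.
  by rewrite (chi_reflect q_prime q_mod8 (a_range j)).
rewrite prodrN card_ord -signr_odd k_odd mulN1r => /eqP.
by rewrite -addr_eq0 -mulr2n -mulr_natl mulf_eq0 (negPf two_neq0) (negPf P_neq0).
Qed.
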